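(* Let $\mathcal C$ be a category with a class of fibrations and a class of cofibrations, let $X$ be a cofibrant object admitting at least one (weak) cylinder object and let $Y$ be a fibrant object admitting at least one (weak) path object. Then the homotopy relation on maps $X\to Y$ is an equivalence relation; more precisely, for any fixed weak cylinder object of $X$ or weak path object of $Y$, the relation ''homotopic relative to it'' is an equivalence relation (and these relations all coincide).
   Context: A class of cofibrations on $\mathcal C$: a class of maps such that $\mathcal C$ has a cofibrant initial object $0$ ($X$ cofibrant means $0\to X$ is a cofibration), isomorphisms with cofibrant domain are cofibrations, cofibrations compose, and pushouts of a cofibration $A\to B$ along $A\to C$ with $A,C$ cofibrant exist with $C\to C\sqcup_AB$ a cofibration. A class of fibrations is a class of cofibrations in $\mathcal C^{op}$. An acyclic cofibration is a cofibration with the left lifting property against all fibrations between fibrant objects; an acyclic fibration is a fibration with the right lifting property against all cofibrations between cofibrant objects. A weak cylinder object for a cofibrant $X$ is a commutative square with a cofibration $X\sqcup X\hookrightarrow IX$, the codiagonal $X\sqcup X\to X$, a map $IX\to DX$ and an acyclic cofibration $X\to DX$, such that the first inclusion $X\to IX$ is an acyclic cofibration (strong if $DX=X$). A weak path object for a fibrant $Y$ is dually a square with a fibration $PY\to Y\times Y$, the diagonal, a map $TY\to PY$ and an acyclic fibration $TY\to Y$, such that the first projection $PY\to Y$ is an acyclic fibration. Maps $f,g\colon X\to Y$ are homotopic relative to a cylinder object $IX$ if $(f,g)\colon X\sqcup X\to Y$ factors through $X\sqcup X\to IX$, and relative to a path object $PY$ if $(f,g)\colon X\to Y\times Y$ factors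 through $PY\to Y\times Y$. *)

Set Implicit Arguments.
Unset Strict Implicit.

Record Category := {
  Ob :> Type;
  Hom : Ob -> Ob -> Type;
  idm : forall A, Hom A A;
  comp : forall A B C, Hom B C -> Hom A B -> Hom A C;
  comp_assoc : forall A B C D (f : Hom A B) (g : Hom B C) (h : Hom C D),
      comp h (comp g f) = comp (comp h g) f;
  comp_id_l : forall A B (f : Hom A B), comp (idm B) f = f;
  comp_id_r : forall A B (f : Hom A B), comp f (idm A) = f
}.

Arguments Hom {c} _ _.
Arguments idm {c} _.
Arguments comp {c A B C} _ _.

Notation "g \oc f" := (comp g f) (at level 40, left associativity).

Definition op (C : Category) : Category.
Proof.
  refine {| Ob := Ob C;
            Hom := fun A B => @Hom C B A;
            idm := fun A => @idm C A;
            comp := fun A B D (g : @Hom C D B) (f : @Hom C B A) => comp f g |}.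
  - intros; symmetry; apply comp_assoc.
  - intros; apply comp_id_r.
  - intros; apply comp_id_l.
Defined.

Section Basic.
Variable C : Category.

Definition is_iso {A B : C} (f : Hom A B) : Prop :=
  exists g : Hom B A, g \oc f = idm A /\ f \oc g = idm B.

Definition is_initial (I : C) : Prop :=
  forall X : C, exists f : Hom I X, forall g : Hom I X, g = f.

Definition is_pushout {A B C' P : C} (f : Hom A B) (g : Hom A C')
    (i : Hom C' P) (j : Hom B P) : Prop :=
  i \oc g = j \oc f /\
  forall (Q : C) (u : Hom C' Q) (v : Hom B Q), u \oc g = v \oc f ->
    exists h : Hom P Q, h \oc i = u /\ h \oc j = v /\
      forall h' : Hom P Q, h' \oc i = u -> h' \oc j = v -> h' = h.

Definition is_coproduct {X1 X2 S : C} (in1 : Hom X1 S) (in2 : Hom X2 S) : Prop :=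
  forall (Q : C) (u : Hom X1 Q) (v : Hom X2 Q),
    exists h : Hom S Q, h \oc in1 = u /\ h \oc in2 = v /\
      forall h' : Hom S Q, h' \oc in1 = u -> h' \oc in2 = v -> h' = h.

Definition is_product {Y1 Y2 P : C} (pr1 : Hom P Y1) (pr2 : Hom P Y2) : Prop :=
  forall (Q : C) (u : Hom Q Y1) (v : Hom Q Y2),
    exists h : Hom Q P, pr1 \oc h = u /\ pr2 \oc h = v /\
      forall h' : Hom Q P, pr1 \oc h' = u -> pr2 \oc h' = v -> h' = h.

Definition lifts {A B E D : C} (i : Hom A B) (p : Hom E D) : Prop :=
  forall (a : Hom A E) (b : Hom B D), p \oc a = b \oc i ->
    exists h : Hom B E, h \oc i = a /\ p \oc h = b.
End Basic.

Record CofibClass (C : Category) := {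
  cof : forall A B : C, Hom A B -> Prop;
  init : C;
  init_initial : is_initial init;
  init_cofibrant : forall h : Hom init init, cof h;
  iso_cof : forall (A B : C) (f : Hom A B), is_iso f ->
      (forall h : Hom init A, cof h) -> cof f;
  comp_cof : forall (A B D : C) (f : Hom A B) (g : Hom B D),
      cof f -> cof g -> cof (g \oc f);
  pushout_cof : forall (A B C' : C) (f : Hom A B) (g : Hom A C'),
      cof f -> (forall h : Hom init A, cof h) -> (forall h : Hom init C', cof h) ->
      exists (P : C) (i : Hom C' P) (j : Hom B P), is_pushout f g i j /\ cof i
}.

Arguments cof {C} c {A B} _.
Arguments init {C} c.

Definition FibClass (C : Category) := CofibClass (op C).

Section ModelNotions.
Variables (C : Category) (Cof : CofibClass C) (Fib : FibClass C).

Definition is_cof {A B : C} (f : Hom A B) : Prop := cof Cof f.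
Definition is_fib {A B : C} (f : Hom A B) : Prop := @cof (op C) Fib B A f.

(** terminal object of [C] = the initial object of [C^op] *)
Definition term : C := init Fib.

Definition cofibrant (X : C) : Prop := forall h : Hom (init Cof) X, is_cof h.
Definition fibrant (Y : C) : Prop := forall h : Hom Y term, is_fib h.

Definition acyclic_cof {A B : C} (i : Hom A B) : Prop :=
  is_cof i /\ forall (E D : C) (p : Hom E D),
    fibrant E -> fibrant D -> is_fib p -> lifts i p.

Definition acyclic_fib {E D : C} (p : Hom E D) : Prop :=
  is_fib p /\ forall (A B : C) (i : Hom A B),
    cofibrant A -> cofibrant B -> is_cof i -> lifts i p.

Record weak_cylinder (X : C) := {
  cyl_sum : C;
  cyl_in1 : Hom X cyl_sum;
  cyl_in2 : Hom X cyl_sum;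
  cyl_sum_coprod : is_coproduct cyl_in1 cyl_in2;
  cyl_I : C;
  cyl_incl : Hom cyl_sum cyl_I;
  cyl_incl_cof : is_cof cyl_incl;
  cyl_codiag : Hom cyl_sum X;
  cyl_codiag_1 : cyl_codiag \oc cyl_in1 = idm X;
  cyl_codiag_2 : cyl_codiag \oc cyl_in2 = idm X;
  cyl_D : C;
  cyl_p : Hom cyl_I cyl_D;
  cyl_j : Hom X cyl_D;
  cyl_j_acyclic : acyclic_cof cyl_j;
  cyl_square : cyl_p \oc cyl_incl = cyl_j \oc cyl_codiag;
  cyl_first_acyclic : acyclic_cof (cyl_incl \oc cyl_in1)
}.

Record weak_path (Y : C) := {
  path_prod : C;
  path_pr1 : Hom path_prod Y;
  path_pr2 : Hom path_prod Y;
  path_prod_prod : is_product path_pr1 path_pr2;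
  path_P : C;
  path_q : Hom path_P path_prod;
  path_q_fib : is_fib path_q;
  path_diag : Hom Y path_prod;
  path_diag_1 : path_pr1 \oc path_diag = idm Y;
  path_diag_2 : path_pr2 \oc path_diag = idm Y;
  path_T : C;
  path_t : Hom path_T path_P;
  path_r : Hom path_T Y;
  path_r_acyclic : acyclic_fib path_r;
  path_square : path_q \oc path_t = path_diag \oc path_r;
  path_first_acyclic : acyclic_fib (path_pr1 \oc path_q)
}.

(** [(f,g) : X ⊔ X -> Y] factors through [X ⊔ X -> IX]. *)
Definition homotopic_cyl {X Y : C} (Cy : weak_cylinder X) (f g : Hom X Y) : Prop :=
  exists H : Hom (cyl_I Cy) Y,
    H \oc cyl_incl Cy \oc cyl_in1 Cy = f /\ H \oc cyl_incl Cy \oc cyl_in2 Cy = g.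

(** [(f,g) : X -> Y × Y] factors through [PY -> Y × Y]. *)
Definition homotopic_path {X Y : C} (Pa : weak_path Y) (f g : Hom X Y) : Prop :=
  exists H : Hom X (path_P Pa),
    path_pr1 Pa \oc path_q Pa \oc H = f /\ path_pr2 Pa \oc path_q Pa \oc H = g.

End ModelNotions.

Definition is_equivalence {T : Type} (R : T -> T -> Prop) : Prop :=
  (forall x, R x x) /\ (forall x y, R x y -> R y x) /\
  (forall x y z, R x y -> R y z -> R x z).


(* Reflexivity comes from extending [f] along the acyclic cofibration [X -> DX]
   (resp. lifting it along the acyclic fibration [TY -> Y]). The heart of the
   argument is a pair of dual transport lemmas: lifting the acyclic cofibration
   [X -> IX] against the fibration [PY -> Y x Y] shows that two maps [IX -> Y]
   which are path-homotopic on one end of the cylinder are path-homotopic on the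
   other end, and dually for [PY -> Y] against [X + X -> IX]. Applied to two
   cylinder homotopies out of the same map, their other ends are path-homotopic:
   with a constant homotopy this says cylinder homotopy implies path homotopy,
   and in general it gives symmetry and transitivity. *)

Set Implicit Arguments.
Unset Strict Implicit.

Section CofibrationClass.
Variables (D : Category) (K : CofibClass D).

Lemma initial_hom_unique (I Z : D) (f g : Hom I Z) : is_initial I -> f = g.
Proof. intros hI. destruct (hI Z) as [h Hh]. rewrite (Hh f), (Hh g). reflexivity. Qed.

Lemma coproduct_hom_ext (A B S Z : D) (in1 : Hom A S) (in2 : Hom B S) (h h' : Hom S Z) :
  is_coproduct in1 in2 -> h \oc in1 = h' \oc in1 -> h \oc in2 = h' \oc in2 -> h = h'.
Proof.
  intros Hc E1 E2.
  destruct (Hc Z (h \oc in1) (h \oc in2)) as (u & _ & _ & Hu).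
  rewrite (Hu h), (Hu h'); auto.
Qed.

Lemma coproduct_mediating_iso (A B S S' : D) (in1 : Hom A S) (in2 : Hom B S)
    (in1' : Hom A S') (in2' : Hom B S') (h : Hom S S') :
  is_coproduct in1 in2 -> is_coproduct in1' in2' ->
  h \oc in1 = in1' -> h \oc in2 = in2' -> is_iso h.
Proof.
  intros Hc Hc' E1 E2.
  destruct (Hc' S in1 in2) as (k & K1 & K2 & _).
  exists k. split.
  - apply (coproduct_hom_ext Hc); rewrite <- comp_assoc, comp_id_l.
    + rewrite E1; exact K1.
    + rewrite E2; exact K2.
  - apply (coproduct_hom_ext Hc'); rewrite <- comp_assoc, comp_id_l.
    + rewrite K1; exact E1.
    + rewrite K2; exact E2.
Qed.

Lemma pushout_under_initial_coproduct (I A B P : D) (f : Hom I B) (g : Hom I A)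
    (i : Hom A P) (j : Hom B P) :
  is_initial I -> is_pushout f g i j -> is_coproduct i j.
Proof.
  intros hI [_ Hpo] Q u v.
  exact (Hpo Q u v (initial_hom_unique _ _ hI)).
Qed.

Lemma cofibrant_cod_cof (A B : D) (f : Hom A B) :
  cofibrant K A -> cof K f -> cofibrant K B.
Proof.
  intros hA hf h.
  destruct (init_initial K A) as [e _].
  rewrite (initial_hom_unique h (f \oc e) (init_initial K)).
  exact (comp_cof (hA e) hf).
Qed.

Lemma coproduct_cofibrant (A B S : D) (in1 : Hom A S) (in2 : Hom B S) :
  is_coproduct in1 in2 -> cofibrant K A -> cofibrant K B -> cofibrant K S.
Proof.
  intros Hc hA hB.
  destruct (init_initial K A) as [eA _]. destruct (init_initial K B) as [eB _].
  destruct (pushout_cof eA (hB eB) (@init_cofibrant _ K) hA)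
    as (P & i & j & Hpo & Hi).
  pose proof (pushout_under_initial_coproduct (init_initial K) Hpo) as HcP.
  destruct (HcP S in1 in2) as (h & H1 & H2 & _).
  assert (hP : cofibrant K P) by exact (cofibrant_cod_cof hA Hi).
  exact (cofibrant_cod_cof hP (iso_cof (coproduct_mediating_iso HcP Hc H1 H2) hP)).
Qed.

End CofibrationClass.

Section ModelFacts.
Variables (C : Category) (Cof : CofibClass C) (Fib : FibClass C).

Lemma terminal_hom_unique (Z : C) (f g : Hom Z (term Fib)) : f = g.
Proof. exact (initial_hom_unique (D:=op C) f g (init_initial Fib)). Qed.

Lemma product_hom_ext (Y1 Y2 P Z : C) (pr1 : Hom P Y1) (pr2 : Hom P Y2) (h h' : Hom Z P) :
  is_product pr1 pr2 -> pr1 \oc h = pr1 \oc h' -> pr2 \oc h = pr2 \oc h' -> h = h'.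
Proof. exact (@coproduct_hom_ext (op C) Y1 Y2 P Z pr1 pr2 h h'). Qed.

Lemma fibrant_dom_fib (A B : C) (p : Hom A B) :
  fibrant Fib B -> is_fib Fib p -> fibrant Fib A.
Proof. exact (cofibrant_cod_cof (D:=op C) (f:=p)). Qed.

Lemma product_fibrant (Y1 Y2 P : C) (pr1 : Hom P Y1) (pr2 : Hom P Y2) :
  is_product pr1 pr2 -> fibrant Fib Y1 -> fibrant Fib Y2 -> fibrant Fib P.
Proof. exact (coproduct_cofibrant (D:=op C) (in1:=pr1) (in2:=pr2)). Qed.

Lemma terminal_fibrant : fibrant Fib (term Fib).
Proof. intros h. exact (@init_cofibrant _ Fib h). Qed.

Lemma initial_cofibrant : cofibrant Cof (init Cof).
Proof. intros h. exact (@init_cofibrant _ Cof h). Qed.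

Lemma acyclic_cof_extend (A B Y : C) (i : Hom A B) (f : Hom A Y) :
  acyclic_cof Cof Fib i -> fibrant Fib Y -> exists g : Hom B Y, g \oc i = f.
Proof.
  intros [_ Hi] hY.
  destruct (init_initial Fib Y) as [tY _]. destruct (init_initial Fib B) as [tB _].
  destruct (Hi Y (term Fib) tY hY terminal_fibrant (hY tY) f tB
              (terminal_hom_unique _ _)) as [g [Hg _]].
  exists g. exact Hg.
Qed.

Lemma acyclic_fib_lift (A T X : C) (r : Hom T A) (f : Hom X A) :
  acyclic_fib Cof Fib r -> cofibrant Cof X -> exists k : Hom X T, r \oc k = f.
Proof.
  intros [_ Hr] hX.
  destruct (init_initial Cof X) as [eX _]. destruct (init_initial Cof T) as [eT _].
  destruct (Hr (init Cof) X eX initial_cofibrant hX (hX eX) eT f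
              (initial_hom_unique _ _ (init_initial Cof))) as [k [_ Hk]].
  exists k. exact Hk.
Qed.

End ModelFacts.

Section Homotopy.
Variables (C : Category) (Cof : CofibClass C) (Fib : FibClass C) (X Y : C).
Hypotheses (hX : cofibrant Cof X) (hY : fibrant Fib Y).
Variables (Cy : weak_cylinder Cof Fib X) (Pa : weak_path Cof Fib Y).

Lemma cyl_sum_cofibrant : cofibrant Cof (cyl_sum Cy).
Proof. exact (coproduct_cofibrant (cyl_sum_coprod Cy) hX hX). Qed.

Lemma cyl_I_cofibrant : cofibrant Cof (cyl_I Cy).
Proof. exact (cofibrant_cod_cof hX (proj1 (cyl_first_acyclic Cy))). Qed.

Lemma path_prod_fibrant : fibrant Fib (path_prod Pa).
Proof. exact (product_fibrant (path_prod_prod Pa) hY hY). Qed.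

Lemma path_P_fibrant : fibrant Fib (path_P Pa).
Proof. exact (fibrant_dom_fib hY (proj1 (path_first_acyclic Pa))). Qed.

Lemma homotopic_cyl_refl (f : Hom X Y) : homotopic_cyl Cy f f.
Proof.
  destruct (acyclic_cof_extend f (cyl_j_acyclic Cy) hY) as [f0 Hf0].
  assert (Hcodiag : f0 \oc cyl_p Cy \oc cyl_incl Cy = f \oc cyl_codiag Cy).
  { rewrite <- comp_assoc, cyl_square, comp_assoc, Hf0. reflexivity. }
  exists (f0 \oc cyl_p Cy).
  rewrite Hcodiag, <- !comp_assoc, cyl_codiag_1, cyl_codiag_2, comp_id_r.
  split; reflexivity.
Qed.

Lemma homotopic_path_refl (f : Hom X Y) : homotopic_path Pa f f.
Proof.
  destruct (acyclic_fib_lift f (path_r_acyclic Pa) hX) as [k Hk].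
  assert (Hdiag : path_q Pa \oc (path_t Pa \oc k) = path_diag Pa \oc f).
  { rewrite comp_assoc, path_square, <- comp_assoc, Hk. reflexivity. }
  exists (path_t Pa \oc k).
  rewrite <- !comp_assoc, Hdiag, !comp_assoc, path_diag_1, path_diag_2, comp_id_l.
  split; reflexivity.
Qed.

Lemma homotopic_path_cyl_transport (a b : Hom (cyl_I Cy) Y) :
  homotopic_path Pa (a \oc cyl_incl Cy \oc cyl_in1 Cy) (b \oc cyl_incl Cy \oc cyl_in1 Cy) ->
  homotopic_path Pa (a \oc cyl_incl Cy \oc cyl_in2 Cy) (b \oc cyl_incl Cy \oc cyl_in2 Cy).
Proof.
  intros [K [K1 K2]].
  destruct (path_prod_prod Pa a b) as (ab & Ha & Hb & _).
  assert (Hsq : path_q Pa \oc K = ab \oc (cyl_incl Cy \oc cyl_in1 Cy)).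
  { apply (product_hom_ext (path_prod_prod Pa)); rewrite !comp_assoc.
    - rewrite Ha. exact K1.
    - rewrite Hb. exact K2. }
  destruct (proj2 (cyl_first_acyclic Cy) _ _ _ path_P_fibrant path_prod_fibrant
              (path_q_fib Pa) K ab Hsq) as (L & _ & HL).
  exists (L \oc (cyl_incl Cy \oc cyl_in2 Cy)).
  rewrite <- !comp_assoc, (comp_assoc _ L), HL, !comp_assoc, Ha, Hb.
  split; reflexivity.
Qed.

Lemma homotopic_cyl_path_transport (u v : Hom X (path_P Pa)) :
  homotopic_cyl Cy (path_pr1 Pa \oc path_q Pa \oc u) (path_pr1 Pa \oc path_q Pa \oc v) ->
  homotopic_cyl Cy (path_pr2 Pa \oc path_q Pa \oc u) (path_pr2 Pa \oc path_q Pa \oc v).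
Proof.
  intros [H [H1 H2]].
  destruct (cyl_sum_coprod Cy u v) as (uv & Hu & Hv & _).
  assert (Hsq : path_pr1 Pa \oc path_q Pa \oc uv = H \oc cyl_incl Cy).
  { apply (coproduct_hom_ext (cyl_sum_coprod Cy)); rewrite <- comp_assoc.
    - rewrite Hu, H1. reflexivity.
    - rewrite Hv, H2. reflexivity. }
  destruct (proj2 (path_first_acyclic Pa) _ _ _ cyl_sum_cofibrant cyl_I_cofibrant
              (cyl_incl_cof Cy) uv H Hsq) as (L & HL & _).
  exists (path_pr2 Pa \oc path_q Pa \oc L).
  rewrite <- !comp_assoc, !(comp_assoc _ (cyl_incl Cy) L), HL, Hu, Hv.
  split; reflexivity.
Qed.

Lemma homotopic_path_of_cyl_common_source (g f h : Hom X Y) :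
  homotopic_cyl Cy g f -> homotopic_cyl Cy g h -> homotopic_path Pa f h.
Proof.
  intros [H [H1 H2]] [H' [H1' H2']].
  rewrite <- H2, <- H2'. apply homotopic_path_cyl_transport.
  rewrite H1, H1'. apply homotopic_path_refl.
Qed.

Lemma homotopic_cyl_of_path_common_source (g f h : Hom X Y) :
  homotopic_path Pa g f -> homotopic_path Pa g h -> homotopic_cyl Cy f h.
Proof.
  intros [K [K1 K2]] [K' [K1' K2']].
  rewrite <- K2, <- K2'. apply homotopic_cyl_path_transport.
  rewrite K1, K1'. apply homotopic_cyl_refl.
Qed.

Lemma homotopic_cyl_iff_path (f g : Hom X Y) :
  homotopic_cyl Cy f g <-> homotopic_path Pa f g.
Proof.
  split.
  - exact (homotopic_path_of_cyl_common_source (homotopic_cyl_refl f)).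
  - exact (homotopic_cyl_of_path_common_source (homotopic_path_refl f)).
Qed.

Lemma homotopic_cyl_equiv : is_equivalence (homotopic_cyl (Y:=Y) Cy).
Proof.
  assert (Hsym : forall f g : Hom X Y, homotopic_cyl Cy f g -> homotopic_cyl Cy g f).
  { intros f g Hfg. apply homotopic_cyl_iff_path.
    exact (homotopic_path_of_cyl_common_source Hfg (homotopic_cyl_refl f)). }
  split; [|split].
  - exact homotopic_cyl_refl.
  - exact Hsym.
  - intros f g h Hfg Hgh. apply homotopic_cyl_iff_path.
    exact (homotopic_path_of_cyl_common_source (Hsym f g Hfg) Hgh).
Qed.

End Homotopy.

Lemma is_equivalence_iff (T : Type) (R S : T -> T -> Prop) :
  (forall x y, R x y <-> S x y) -> is_equivalence R -> is_equivalence S.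
Proof.
  intros HRS (Hrefl & Hsym & Htrans). split; [|split].
  - intros x. apply HRS, Hrefl.
  - intros x y Hxy. apply HRS, Hsym, HRS, Hxy.
  - intros x y z Hxy Hyz. apply HRS. apply (Htrans x y z); apply HRS; assumption.
Qed.

Unset Implicit Arguments.

Theorem theorem2p1p17 (C : Category) (Cof : CofibClass C) (Fib : FibClass C)
    (X Y : C) (hX : cofibrant Cof X) (hY : fibrant Fib Y)
    (hcyl : exists Cy : weak_cylinder Cof Fib X, True)
    (hpath : exists Pa : weak_path Cof Fib Y, True) :
  (forall Cy : weak_cylinder Cof Fib X,
      is_equivalence (@homotopic_cyl C Cof Fib X Y Cy)) /\
  (forall Pa : weak_path Cof Fib Y,
      is_equivalence (@homotopic_path C Cof Fib X Y Pa)) /\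
  (forall (Cy : weak_cylinder Cof Fib X) (Pa : weak_path Cof Fib Y) (f g : Hom X Y),
      homotopic_cyl Cy f g <-> homotopic_path Pa f g) /\
  (forall (Cy Cy' : weak_cylinder Cof Fib X) (f g : Hom X Y),
      homotopic_cyl Cy f g <-> homotopic_cyl Cy' f g) /\
  (forall (Pa Pa' : weak_path Cof Fib Y) (f g : Hom X Y),
      homotopic_path Pa f g <-> homotopic_path Pa' f g).
Proof.
  destruct hcyl as [Cy0 _], hpath as [Pa0 _].
  pose proof (homotopic_cyl_iff_path hX hY) as key.
  split; [|split; [|split; [|split]]].
  - intros Cy. exact (homotopic_cyl_equiv hX hY Cy Pa0).
  - intros Pa. exact (is_equivalence_iff (key Cy0 Pa) (homotopic_cyl_equiv hX hY Cy0 Pa)).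
  - exact key.
  - intros Cy Cy' f g. exact (iff_trans (key Cy Pa0 f g) (iff_sym (key Cy' Pa0 f g))).
  - intros Pa Pa' f g. exact (iff_trans (iff_sym (key Cy0 Pa f g)) (key Cy0 Pa' f g)).
Qed.
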